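(* Let $\Gamma$ be the first Grigorchuk group with generators $a,b,c,d$, acting on the right on $\{0,1\}^{\mathbb N}$, and let $\rho=111\cdots$. For a word $w=w_1\cdots w_n$ over $\{a,b,c,d\}$ set $\delta(w)=\#\{\rho\,w_{i+1}\cdots w_n: i=0,\dots,n\}$. Let $\eta$ be the real root of $t^3+t^2+t-2$. There exists a constant $C$ such that for every $n\in\mathbb N$ there exists a word $w_n$ over $\{a,b,c,d\}$ of length at most $C(2/\eta)^n$ with $\delta(w_n)\ge 2^n$.
   Context: The first Grigorchuk group $\Gamma$ is the group of permutations of $\{0,1\}^{\mathbb N}$ (acting on the right) generated by $a,b,c,d$, defined recursively for $x\in\{0,1\}$ and infinite binary sequences $u$ by: $(xu)a=(1-x)u$; $(0u)b=0(ua)$, $(1u)b=1(uc)$; $(0u)c=0(ua)$, $(1u)c=1(ud)$; $(0u)d=0u$, $(1u)d=1(ub)$. *)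

From Stdlib Require Import Reals List ClassicalEpsilon.
Import ListNotations.

Inductive gen : Type := ga | gb | gc | gd.

(* Internal states: generators plus the identity (needed for d on 0u). *)
Inductive state : Type := Sa | Sb | Sc | Sd | Se.

(* Points of the boundary {0,1}^N; false = 0, true = 1. *)
Definition point := nat -> bool.

Definition shift (u : point) : point := fun n => u (S n).

(* app s u k = k-th letter of the image of u under the state s.
   (xu)a = (1-x)u; (0u)b = 0(ua), (1u)b = 1(uc); (0u)c = 0(ua), (1u)c = 1(ud);
   (0u)d = 0u, (1u)d = 1(ub). *)
Fixpoint app (s : state) (u : point) (k : nat) {struct k} : bool :=
  match k with
  | O => match s with Sa => negb (u O) | _ => u O end
  | S k' =>
      match s with
      | Sa | Se => u (S k')
      | Sb => app (if u O then Sc else Sa) (shift u) k'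
      | Sc => app (if u O then Sd else Sa) (shift u) k'
      | Sd => app (if u O then Sb else Se) (shift u) k'
      end
  end.

Definition state_of (g : gen) : state :=
  match g with ga => Sa | gb => Sb | gc => Sc | gd => Sd end.

Definition act (u : point) (g : gen) : point := app (state_of g) u.

Definition act_word (u : point) (w : list gen) : point := fold_left act w u.

Definition rho : point := fun _ => true.

Definition eqb_pt (x y : point) : bool :=
  if excluded_middle_informative (x = y) then true else false.

Fixpoint nb_distinct (l : list point) : nat :=
  match l with
  | [] => O
  | x :: l' => if existsb (eqb_pt x) l' then nb_distinct l' else S (nb_distinct l')
  end.

Definition delta (w : list gen) : nat :=
  nb_distinct (map (fun i => act_word rho (skipn i w)) (seq 0 (S (length w)))).

(* Consider the words [a y_1 a y_2 ... a y_m] with [y_i] in {b,c,d} and the substitution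
   [sigma : b -> bdc, c -> bb, d -> cc]. Reading [a sigma(l)] from a point [xt] is, up to the
   first letter and a factor [a] governed by the parity of the number of [b]'s in [l], reading
   [a l] (for x = 1) or [l a] (for x = 0) from [t]. Hence along the suffixes of
   [Y_(n+1) = d c sigma(Y_n)], the orbit points of [rho] contain both [1p] and [0(pa)] for each
   orbit point [p] along the suffixes of [Y_n], so [b a Y_n] visits at least [2^n] points.
   Giving [b], [c], [d] the weights [1], [eta], [eta^2], [sigma] multiplies weights by [2/eta],
   and [b Y_(n+1) = sigma(b Y_n)] has weight [(2/eta)^n], which bounds the length. *)

From Stdlib Require Import Reals List Bool FinFun Lra Lia FunctionalExtensionality ClassicalEpsilon.
Import ListNotations.
Open Scope R_scope.

Definition cons_pt (x : bool) (t : point) : point :=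
  fun k => match k with O => x | S k' => t k' end.

Lemma cons_pt_surj (u : point) : exists x t, u = cons_pt x t.
Proof.
  exists (u 0%nat), (shift u).
  apply functional_extensionality; intros [|k]; reflexivity.
Qed.

Lemma cons_pt_inj x t t' : cons_pt x t = cons_pt x t' -> t = t'.
Proof.
  intro H; apply functional_extensionality; intro k.
  exact (f_equal (fun u => u (S k)) H).
Qed.

Lemma cons_pt_head x x' t t' : cons_pt x t = cons_pt x' t' -> x = x'.
Proof. intro H; exact (f_equal (fun u => u 0%nat) H). Qed.

Lemma act_word_nil u : act_word u [] = u.
Proof. reflexivity. Qed.

Lemma act_word_cons u g w : act_word u (g :: w) = act_word (act u g) w.
Proof. reflexivity. Qed.

Lemma act_word_app u w1 w2 : act_word u (w1 ++ w2) = act_word (act_word u w1) w2.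
Proof. apply fold_left_app. Qed.

(* The wreath recursion: [section g x] is the restriction of [g] to the subtree [x], as a word
   (the empty word stands for the identity state of [d] on [0]). *)
Definition section (g : gen) (x : bool) : list gen :=
  match g, x with
  | ga, _ => []
  | gb, false | gc, false => [ga]
  | gb, true => [gc]
  | gc, true => [gd]
  | gd, false => []
  | gd, true => [gb]
  end.

Lemma act_cons_pt x t g :
  act (cons_pt x t) g =
  cons_pt (match g with ga => negb x | _ => x end) (act_word t (section g x)).
Proof.
  apply functional_extensionality; intros [|k]; destruct g, x; try reflexivity.
  destruct k; reflexivity.
Qed.

Lemma act_a_a u : act (act u ga) ga = u.
Proof.
  destruct (cons_pt_surj u) as [x [t ->]].
  rewrite !act_cons_pt, !act_word_nil, negb_involutive; reflexivity.
Qed.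

(* The induction cycles through the three relations of the Klein group [{1,b,c,d}]. *)
Lemma klein_relations_at k : forall u,
  act (act u gc) gd k = act u gb k /\
  act (act u gd) gb k = act u gc k /\
  act (act u gb) gc k = act u gd k.
Proof.
  induction k as [|k IH]; intro u; destruct (cons_pt_surj u) as [x [t ->]];
    rewrite !act_cons_pt; destruct x; cbn; auto.
  - destruct (IH t) as (Hcd & Hdb & Hbc); auto.
  - rewrite act_a_a; auto.
Qed.

Lemma act_c_d u : act (act u gc) gd = act u gb.
Proof. apply functional_extensionality; intro k; apply klein_relations_at. Qed.

Inductive letter : Type := Lb | Lc | Ld.

Definition gen_of (y : letter) : gen := match y with Lb => gb | Lc => gc | Ld => gd end.

Definition sigma_letter (y : letter) : list letter :=
  match y with Lb => [Lb; Ld; Lc] | Lc => [Lb; Lb] | Ld => [Lc; Lc] end.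

Definition sigma (l : list letter) : list letter := flat_map sigma_letter l.

Lemma sigma_app l1 l2 : sigma (l1 ++ l2) = sigma l1 ++ sigma l2.
Proof. apply flat_map_app. Qed.

Definition a_word (l : list letter) : list gen := flat_map (fun y => [ga; gen_of y]) l.
Definition word_a (l : list letter) : list gen := flat_map (fun y => [gen_of y; ga]) l.

Lemma a_word_cons y l : a_word (y :: l) = ga :: gen_of y :: a_word l.
Proof. reflexivity. Qed.

Lemma word_a_cons y l : word_a (y :: l) = gen_of y :: ga :: word_a l.
Proof. reflexivity. Qed.

Lemma a_word_app l1 l2 : a_word (l1 ++ l2) = a_word l1 ++ a_word l2.
Proof. apply flat_map_app. Qed.

Lemma length_a_word l : length (a_word l) = (2 * length l)%nat.
Proof. induction l as [|y l IH]; cbn; [reflexivity|]. fold (a_word l); lia. Qed.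

Lemma act_word_a_word_a u l : act_word (act u ga) (word_a l) = act (act_word u (a_word l)) ga.
Proof.
  enough (ga :: word_a l = a_word l ++ [ga]) as E
    by (rewrite <- act_word_cons, E, act_word_app; reflexivity).
  induction l as [|y l IH]; cbn; [reflexivity|]. fold (word_a l) (a_word l); rewrite IH; reflexivity.
Qed.

Fixpoint odd_b (l : list letter) : bool :=
  match l with [] => false | Lb :: l' => negb (odd_b l') | _ :: l' => odd_b l' end.

Definition act_a_if (e : bool) (u : point) : point := if e then act u ga else u.

(* The two bits must be treated together: at [0] the sections of [b] and [c] are [a], which
   turns [a l] into [l a]. *)
Lemma act_cons_pt_a_word_sigma l : forall t,
  act_word (cons_pt true t) (a_word (sigma l)) =
    cons_pt (negb (odd_b l)) (act_a_if (odd_b l) (act_word t (a_word l))) /\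
  act_word (cons_pt false t) (a_word (sigma l)) =
    cons_pt (odd_b l) (act_a_if (odd_b l) (act_word t (word_a l))).
Proof.
  induction l as [|y l IH]; intro t; [split; reflexivity|].
  change (sigma (y :: l)) with (sigma_letter y ++ sigma l).
  rewrite a_word_app, word_a_cons, a_word_cons, !act_word_app.
  destruct y; cbn [sigma_letter a_word flat_map List.app gen_of odd_b];
    rewrite !act_word_cons, !act_word_nil, ?act_cons_pt; cbn [section negb];
    rewrite ?act_word_cons, ?act_word_nil, ?act_c_d; split;
    first [rewrite (proj1 (IH _)) | rewrite (proj2 (IH _))];
    rewrite ?act_word_a_word_a; destruct (odd_b l); cbn [act_a_if negb]; rewrite ?act_a_a; reflexivity.
Qed.

Definition pt_of (l : list letter) : point := act_word rho (a_word l).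

Lemma rho_cons_pt : rho = cons_pt true rho.
Proof. apply functional_extensionality; intros [|k]; reflexivity. Qed.

Lemma pt_of_sigma l :
  pt_of (sigma l) = cons_pt (negb (odd_b l)) (act_a_if (odd_b l) (pt_of l)).
Proof. unfold pt_of; rewrite rho_cons_pt at 1; apply act_cons_pt_a_word_sigma. Qed.

Lemma pt_of_cons_sigma y l : y <> Ld ->
  pt_of (y :: sigma l) = cons_pt (odd_b l) (act_a_if (odd_b l) (act (pt_of l) ga)).
Proof.
  intro Hy; unfold pt_of.
  rewrite a_word_cons, !act_word_cons, rho_cons_pt, !act_cons_pt.
  destruct y; [| |easy]; cbn [section gen_of negb]; rewrite !act_word_cons, !act_word_nil;
    rewrite (proj2 (act_cons_pt_a_word_sigma _ _)), act_word_a_word_a, <- rho_cons_pt; reflexivity.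
Qed.

Definition suffix {A : Type} (l Y : list A) : Prop := exists pre, Y = pre ++ l.

Lemma suffix_sigma l Y : suffix l Y -> suffix (sigma l) (sigma Y).
Proof. intros [pre ->]; exists (sigma pre); apply sigma_app. Qed.

Lemma sigma_letter_last z : exists p y, sigma_letter z = p ++ [y] /\ y <> Ld.
Proof.
  destruct z; [exists [Lb; Ld], Lc | exists [Lb], Lb | exists [Lc], Lc]; split; easy.
Qed.

Lemma suffix_cons_sigma l Y : suffix l Y ->
  exists y, y <> Ld /\ suffix (y :: sigma l) (Lc :: sigma Y).
Proof.
  intros [pre ->]; destruct pre as [|z pre _] using rev_ind.
  - exists Lc; split; [discriminate | exists []; reflexivity].
  - destruct (sigma_letter_last z) as (p & y & Ez & Hy).
    exists y; split; [exact Hy|]; exists (Lc :: sigma pre ++ p); cbn [List.app].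
    rewrite !sigma_app; change (sigma [z]) with (sigma_letter z ++ []).
    rewrite Ez, app_nil_r, <- !app_assoc; reflexivity.
Qed.

Fixpoint y_word (n : nat) : list letter :=
  match n with O => [] | S m => Ld :: Lc :: sigma (y_word m) end.

Definition level_point (n : nat) (p : point) : Prop :=
  exists l, suffix l (y_word n) /\ p = pt_of l.

(* According to the parity of [b] in [l], [sigma l] and [y :: sigma l] give the two children. *)
Lemma level_point_children n p : level_point n p ->
  level_point (S n) (cons_pt true p) /\ level_point (S n) (cons_pt false (act p ga)).
Proof.
  intros (l & Hl & ->).
  assert (Hsigma : suffix (sigma l) (y_word (S n))).
  { destruct (suffix_sigma _ _ Hl) as [pre E]; exists (Ld :: Lc :: pre); cbn; rewrite E; reflexivity. }
  destruct (suffix_cons_sigma _ _ Hl) as (y & Hy & pre & E).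
  assert (Hcons : suffix (y :: sigma l) (y_word (S n))) by (exists (Ld :: pre); cbn; rewrite E; reflexivity).
  split.
  - destruct (odd_b l) eqn:Eb.
    + exists (y :: sigma l); split; [exact Hcons|].
      rewrite pt_of_cons_sigma, Eb by exact Hy; cbn; rewrite act_a_a; reflexivity.
    + exists (sigma l); split; [exact Hsigma|]; rewrite pt_of_sigma, Eb; reflexivity.
  - destruct (odd_b l) eqn:Eb.
    + exists (sigma l); split; [exact Hsigma|]; rewrite pt_of_sigma, Eb; reflexivity.
    + exists (y :: sigma l); split; [exact Hcons|]; rewrite pt_of_cons_sigma, Eb by exact Hy; reflexivity.
Qed.

Lemma NoDup_map_app {A B : Type} (f g : A -> B) (L : list A) :
  Injective f -> Injective g -> (forall x y, f x <> g y) ->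
  NoDup L -> NoDup (map f L ++ map g L).
Proof.
  intros Hf Hg Hfg HL; apply NoDup_app; try apply Injective_map_NoDup; try assumption.
  intros b Hb Hb'; apply in_map_iff in Hb as (x & <- & _); apply in_map_iff in Hb' as (y & E & _).
  exact (Hfg x y (eq_sym E)).
Qed.

Lemma level_points_count n : exists L, NoDup L /\ length L = (2 ^ n)%nat /\
  forall p, In p L -> level_point n p.
Proof.
  induction n as [|n (L & HN & Hlen & HL)].
  - exists [rho]; repeat split; [repeat constructor; easy|].
    intros p [<-|[]]; exists []; split; [exists []; reflexivity | reflexivity].
  - exists (map (cons_pt true) L ++ map (fun p => cons_pt false (act p ga)) L); split; [|split].
    + apply NoDup_map_app; [| |intros x y E; discriminate (cons_pt_head _ _ _ _ E) | exact HN].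
      * intros x y; apply cons_pt_inj.
      * intros x y E; rewrite <- (act_a_a x), <- (act_a_a y), (cons_pt_inj _ _ _ E); reflexivity.
    + rewrite length_app, !length_map, Hlen; cbn; lia.
    + intros p Hp; apply in_app_or in Hp as [Hp|Hp]; apply in_map_iff in Hp as (q & <- & Hq);
        apply (level_point_children _ _ (HL q Hq)).
Qed.

Lemma existsb_eqb_pt x l : existsb (eqb_pt x) l = true <-> In x l.
Proof.
  rewrite existsb_exists; unfold eqb_pt; split.
  - intros (y & Hy & E); destruct (excluded_middle_informative (x = y)) as [->|]; easy.
  - intro Hx; exists x; split; [exact Hx|]; destruct (excluded_middle_informative (x = x)); easy.
Qed.

Lemma nb_distinct_spec l :
  exists l', NoDup l' /\ (forall x, In x l <-> In x l') /\ length l' = nb_distinct l.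
Proof.
  induction l as [|x l (l' & HN & Hin & Hlen)]; [exists []; repeat constructor; easy|].
  cbn [nb_distinct]; destruct (existsb (eqb_pt x) l) eqn:E.
  - apply existsb_eqb_pt in E; exists l'; split; [exact HN|]; split; [|exact Hlen].
    intro y; rewrite <- Hin; cbn; split; [intros [<-|Hy]|]; auto.
  - exists (x :: l'); split; [|split].
    + constructor; [rewrite <- Hin, <- existsb_eqb_pt, E; discriminate | exact HN].
    + intro y; cbn; rewrite Hin; reflexivity.
    + cbn; rewrite Hlen; reflexivity.
Qed.

Lemma NoDup_incl_length_nb_distinct L l : NoDup L -> incl L l -> (length L <= nb_distinct l)%nat.
Proof.
  intros HN Hincl; destruct (nb_distinct_spec l) as (l' & _ & Hin & <-).
  apply NoDup_incl_length; [exact HN|]; intros p Hp; apply Hin, Hincl, Hp.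
Qed.

Lemma delta_ge w L : NoDup L ->
  (forall p, In p L -> exists i, (i <= length w)%nat /\ p = act_word rho (skipn i w)) ->
  (length L <= delta w)%nat.
Proof.
  intros HN HL; apply NoDup_incl_length_nb_distinct; [exact HN|].
  intros p Hp; destruct (HL p Hp) as (i & Hi & ->).
  apply (in_map (fun j => act_word rho (skipn j w))), in_seq; lia.
Qed.

Definition grigorchuk_word (n : nat) : list gen := gb :: a_word (y_word n).

Lemma delta_grigorchuk_word n : (2 ^ n <= delta (grigorchuk_word n))%nat.
Proof.
  destruct (level_points_count n) as (L & HN & <- & HL).
  apply delta_ge; [exact HN|]; intros p Hp.
  destruct (HL p Hp) as (l & [pre Hpre] & ->).
  exists (S (length (a_word pre))); unfold grigorchuk_word; rewrite Hpre, a_word_app; split.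
  - cbn [length]; rewrite length_app; lia.
  - cbn [skipn]; rewrite skipn_app, skipn_all, Nat.sub_diag; reflexivity.
Qed.

(* The weights [b = 1], [c = eta], [d = eta^2] make [sigma_letter] multiply weight by [2/eta]. *)
Definition letter_weight (e : R) (y : letter) : R :=
  match y with Lb => 1 | Lc => e | Ld => e ^ 2 end.

Fixpoint weight (e : R) (l : list letter) : R :=
  match l with [] => 0 | y :: l' => letter_weight e y + weight e l' end.

Lemma weight_app e l1 l2 : weight e (l1 ++ l2) = weight e l1 + weight e l2.
Proof. induction l1 as [|y l1 IH]; cbn; [|rewrite IH]; ring. Qed.

Section Eta.
Variable eta : R.
Hypothesis eta_root : eta ^ 3 + eta ^ 2 + eta - 2 = 0.

Lemma eta_bounds : 0 < eta < 1.
Proof. split; nra. Qed.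

Lemma weight_sigma l : weight eta (sigma l) = 2 / eta * weight eta l.
Proof.
  destruct eta_bounds as [Hpos _].
  replace (2 / eta) with (eta ^ 2 + eta + 1) by (field_simplify_eq; lra).
  induction l as [|y l IH]; [cbn; ring|].
  change (sigma (y :: l)) with (sigma_letter y ++ sigma l).
  rewrite weight_app, IH; destruct y; cbn; nra.
Qed.

Lemma weight_y_word n : weight eta (Lb :: y_word n) = (2 / eta) ^ n.
Proof.
  induction n as [|n IH]; [cbn; ring|].
  change (Lb :: y_word (S n)) with (sigma (Lb :: y_word n)).
  rewrite weight_sigma, IH; reflexivity.
Qed.

Lemma length_le_weight l : INR (length l) * eta ^ 2 <= weight eta l.
Proof.
  destruct eta_bounds.
  induction l as [|y l IH]; cbn [length weight]; [rewrite Rmult_0_l; lra|].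
  rewrite S_INR; destruct y; cbn [letter_weight]; nra.
Qed.

Lemma length_grigorchuk_word n :
  INR (length (grigorchuk_word n)) <= 2 / eta ^ 2 * (2 / eta) ^ n.
Proof.
  destruct eta_bounds; assert (0 < eta ^ 2) by nra.
  pose proof (length_le_weight (Lb :: y_word n)) as Hw; rewrite weight_y_word in Hw.
  unfold grigorchuk_word; cbn [length] in *; rewrite length_a_word, !S_INR, mult_INR in *.
  apply (Rmult_le_reg_r (eta ^ 2)); [assumption|].
  replace (2 / eta ^ 2 * (2 / eta) ^ n * eta ^ 2) with (2 * (2 / eta) ^ n) by (field; lra).
  cbn [INR]; nra.
Qed.

End Eta.

Theorem proposition4p7 :
  forall eta : R, eta ^ 3 + eta ^ 2 + eta - 2 = 0 ->
  exists C : R, forall n : nat, exists w : list gen,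
    INR (length w) <= C * (2 / eta) ^ n /\ (2 ^ n <= delta w)%nat.
Proof.
  intros eta Heta; exists (2 / eta ^ 2); intro n; exists (grigorchuk_word n).
  split; [apply length_grigorchuk_word, Heta | apply delta_grigorchuk_word].
Qed.
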